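(* Let $G=(V,E)$ be an undirected hypergraph in which every node has finite degree. Then $\mathsf{Hall}(G)$ equals the supremum of all $\alpha$ for which $G$ is $\alpha$-orientable, where orientations are allowed to be randomized (fractional).
   Context: For $U\subseteq V$, $E[U]\subseteq E$ is the set of edges with at least one incident node in $U$. The Hall density is $\mathsf{Hall}(G)=\inf\{|E[U]|/|U|: U\subseteq V,\ 0<|U|<\infty\}$. An orientation is a map $f:E\to V$ with $f(e)$ incident to $e$; a randomized (fractional) orientation assigns to each edge a probability distribution over its incident nodes, and the indegree of $v$ is the total (expected) amount of edges assigned to $v$. $G$ is $\alpha$-orientable if some (randomized) orientation gives every node indegree at least $\alpha$. *)

From HB Require Import structures.
From mathcomp Require Import all_boot all_order all_algebra finmap.
From mathcomp Require Import boolp classical_sets cardinality reals constructive_ereal ereal.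
Set Implicit Arguments. Unset Strict Implicit. Unset Printing Implicit Defensive.
Import Order.TTheory GRing.Theory Num.Theory.
Local Open Scope classical_set_scope.
Local Open Scope fset_scope.
Local Open Scope ring_scope.

(* A hypergraph: a (possibly infinite) node type V, an edge type E (multi-edges
   allowed), and for each edge its (finite) set of incident nodes [ends e]. *)

Definition inc_edges (V E : choiceType) (ends : E -> {fset V}) (v : V) : set E :=
  [set e | v \in ends e].

Definition edges_of (V E : choiceType) (ends : E -> {fset V}) (U : {fset V}) : set E :=
  [set e | exists2 v, v \in U & v \in ends e].

Definition finite_degree (V E : choiceType) (ends : E -> {fset V}) : Prop :=
  forall v : V, finite_set (inc_edges ends v).

Definition Hall (R : realType) (V E : choiceType) (ends : E -> {fset V}) : \bar R :=
  ereal_inf [set ((#|` fset_set (edges_of ends U)|%:R / #|` U|%:R : R))%:E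
            | U in [set U : {fset V} | U != fset0]].

Definition frac_orientation (R : realType) (V E : choiceType) (ends : E -> {fset V})
  (p : E -> V -> R) : Prop :=
  [/\ forall e v, 0 <= p e v,
      forall e v, v \notin ends e -> p e v = 0 &
      forall e, \sum_(v <- ends e) p e v = 1].

Definition indegree (R : realType) (V E : choiceType) (ends : E -> {fset V})
  (p : E -> V -> R) (v : V) : R :=
  \sum_(e <- fset_set (inc_edges ends v)) p e v.

Definition orientable (R : realType) (V E : choiceType) (ends : E -> {fset V})
  (alpha : R) : Prop :=
  exists p : E -> V -> R, frac_orientation ends p /\
    forall v, alpha <= indegree ends p v.

From HB Require Import structures.
From mathcomp Require Import all_boot all_order all_algebra finmap.
From mathcomp Require Import boolp classical_sets cardinality reals constructive_ereal ereal.
From mathcomp Require Import topology normedtype.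
From mathcomp Require Import zify lra.
Set Implicit Arguments. Unset Strict Implicit. Unset Printing Implicit Defensive.
Import Order.TTheory GRing.Theory Num.Theory.
Import numFieldNormedType.Exports.
Local Open Scope fset_scope.
Local Open Scope nat_scope.

(* If some fractional orientation gives every node indegree at least alpha, then
   summing indegrees over a finite nonempty U counts each edge of E[U] at most
   once, so alpha |U| <= |E[U]|; hence the supremum is at most Hall(G).

   Conversely let alpha < beta < Hall(G) and fix a finite U.  Cut every edge
   meeting U into b units and distribute them among its nodes in U so that no
   unit sits at a node whose load exceeds by two or more the load of a node of
   the same edge; moving such a unit decreases the sum of squared loads, so a
   balanced distribution exists.  Given a node of load d, some level d + j with
   1 <= j <= |U| is the load of no node.  Each edge meeting the set T of nodes
   of load below d + j then has all its units in T, whence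
   beta |T| b <= |E[T]| b <= |T| (d + |U|), i.e. d >= beta b - |U| > alpha b
   for b large.  Dividing by b gives a fractional orientation with indegree at
   least alpha on U.  Finally, the fractional orientations with indegree at
   least alpha at a node v form closed subsets of the compact cube
   [0,1]^(E x V) with the finite intersection property, so by Tychonoff they
   have a common point. *)

Section FsetSums.
Variable T : choiceType.
Implicit Types (A B : {fset T}).

Lemma leq_sum_fsubset A B (f : T -> nat) :
  A `<=` B -> \sum_(x <- A) f x <= \sum_(x <- B) f x.
Proof.
move=> /fsubsetP AB.
exact: (uniq_sub_le_big leqnn (fun m n => leq_addr n m) xpredT f (fset_uniq A) (fset_uniq B) AB).
Qed.

Lemma leq_sum_fsupport A B (f : T -> nat) :
  (forall x, x \in A -> 0 < f x -> x \in B) ->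
  \sum_(x <- A) f x <= \sum_(x <- B) f x.
Proof.
move=> AB; rewrite -(big_fset_incl _ (fsubsetIl A B)).
  exact/leq_sum_fsubset/fsubsetIr.
move=> x xA; rewrite in_fsetI xA => /= xB; apply/eqP; rewrite -leqn0 leqNgt.
by apply: contra xB; apply: AB.
Qed.

Lemma sum_fset_nat_const A (c : nat) : \sum_(x <- A) c = #|` A| * c.
Proof. by rewrite big_const_seq count_predT iter_addn_0 mulnC. Qed.

Lemma sumr_fset_const (R : nmodType) A (c : R) : (\sum_(x <- A) c = c *+ #|` A|)%R.
Proof. by rewrite big_const_seq count_predT iter_addr_0. Qed.

Lemma ler_sum_fsubset (R : numDomainType) A B (f : T -> R) :
  A `<=` B -> (forall x, x \in B -> 0 <= f x)%R ->
  (\sum_(x <- A) f x <= \sum_(x <- B) f x)%R.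
Proof.
move=> AB f0; rewrite (big_fsetID _ (mem A) B) /=.
have -> : [fset x in B | x \in A] = A.
  by apply/fsetP => x; rewrite !inE andbC; case: (boolP (x \in A)) => // /(fsubsetP AB).
by rewrite lerDl big_seq sumr_ge0 // => x; rewrite !inE => /andP[xB _]; apply: f0.
Qed.

Definition shift_unit (h : T -> nat) w u : T -> nat := fun x =>
  if x == w then (h x).-1 else if x == u then (h x).+1 else h x.

Lemma sum_shift_unit A (h : T -> nat) w u :
  w \in A -> u \in A -> w != u -> 0 < h w ->
  \sum_(x <- A) shift_unit h w u x = \sum_(x <- A) h x.
Proof.
move=> wA uA wu hw; have uAw : u \in A `\ w by rewrite in_fsetD1 eq_sym wu.
rewrite [in LHS](big_fsetD1 w wA) [in LHS](big_fsetD1 u uAw).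
rewrite [in RHS](big_fsetD1 w wA) [in RHS](big_fsetD1 u uAw) /shift_unit.
rewrite eqxx eq_sym (negbTE wu) eqxx (@eq_big_seq _ _ _ _ _ _ h); last first.
  by move=> x; rewrite !in_fsetD1 => /and3P[/negbTE -> /negbTE -> _].
by case: (h w) hw => // n _ /=; rewrite addSn addnS.
Qed.

Lemma exists_gap_above A (f : T -> nat) v : v \in A ->
  exists2 j, 0 < j <= #|` A| & forall x, x \in A -> f x != f v + j.
Proof.
move=> vA; apply: contrapT => nogap.
have values_hit : {subset iota (f v) #|` A|.+1 <= map f A}.
  move=> i; rewrite mem_iota => /andP[vi ilt].
  have [->|iv] := eqVneq i (f v); first exact: map_f.
  have [x xA <-] : exists2 x, x \in A & f x = i.
    apply: contrapT => nohit; apply: nogap; exists (i - f v); first lia.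
    by move=> x xA; apply/eqP => fx; apply: nohit; exists x => //; lia.
  exact: map_f.
by have := uniq_leq_size (iota_uniq _ _) values_hit; rewrite size_iota size_map ltnn.
Qed.

End FsetSums.

Section LoadBalancing.
Variables (V E : choiceType) (ends : E -> {fset V}) (U : {fset V}) (F : {fset E}) (b : nat).
Implicit Types (g : E -> V -> nat).

Definition distribution g :=
  (forall e v, 0 < g e v -> [/\ e \in F, v \in ends e & v \in U]) /\
  (forall e, e \in F -> \sum_(v <- U) g e v = b).

Definition load g v := \sum_(e <- F) g e v.

Definition potential g := \sum_(v <- U) load g v ^ 2.

Definition balanced g := forall e w u, e \in F -> u \in U -> u \in ends e ->
  0 < g e w -> load g w <= (load g u).+1.

Definition move_unit g e0 w u : E -> V -> nat := fun e =>
  if e == e0 then shift_unit (g e) w u else g e.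

Lemma distribution_move g e0 w u : distribution g -> u \in U -> u \in ends e0 ->
  w != u -> 0 < g e0 w -> distribution (move_unit g e0 w u).
Proof.
move=> [supp sumb] uU ue0 wu gw; have [e0F _ wU] := supp _ _ gw; split.
- move=> e v; rewrite /move_unit /shift_unit; case: eqP => [-> | _]; last exact: supp.
  case: eqP => [-> _ | _]; first exact: supp.
  by case: eqP => [-> _ | _]; [split | exact: supp].
- move=> e eF; rewrite /move_unit; case: eqP => [-> | _]; last exact: sumb.
  by rewrite sum_shift_unit // sumb.
Qed.

Lemma load_move g e0 w u x : e0 \in F -> w != u -> 0 < g e0 w ->
  load (move_unit g e0 w u) x + (x == w) = load g x + (x == u).
Proof.
move=> e0F wu gw; rewrite /load !(big_fsetD1 e0 e0F) /=.
rewrite (@eq_big_seq _ _ _ _ _ _ (fun e => g e x)); last first.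
  by move=> e; rewrite in_fsetD1 /move_unit => /andP[/negbTE -> _].
rewrite /move_unit /shift_unit eqxx; case: (eqVneq x w) => [-> | xw].
  by rewrite (negbTE wu) /= addn0 addn1 -addSn prednK.
by case: (eqVneq x u) => [-> | xu] /=; rewrite ?addn0 ?addn1 ?addSn.
Qed.

Lemma potential_move_lt g e0 w u : distribution g -> u \in U -> 0 < g e0 w ->
  (load g u).+1 < load g w ->
  potential (move_unit g e0 w u) < potential g.
Proof.
move=> [supp _] uU gw lt; have [e0F _ wU] := supp _ _ gw.
have wu : w != u by apply: contraTneq lt => ->; rewrite ltnNge leqnSn.
have uUw : u \in U `\ w by rewrite in_fsetD1 eq_sym wu.
have lw := load_move w e0F wu gw; have lu := load_move u e0F wu gw.
rewrite eqxx (negbTE wu) addn0 in lw; rewrite eqxx eq_sym (negbTE wu) addn0 in lu.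
rewrite /potential !(big_fsetD1 w wU) !(big_fsetD1 u uUw) /=.
rewrite (@eq_big_seq _ _ _ _ _ _ (fun x => load g x ^ 2)); last first.
  move=> x; rewrite !in_fsetD1 => /and3P[xu xw _].
  by have := load_move x e0F wu gw; rewrite (negbTE xu) (negbTE xw) !addn0 => ->.
rewrite -lw lu /= !addn1 in lt *; nia.
Qed.

Lemma exists_balanced g0 : distribution g0 -> exists2 g, distribution g & balanced g.
Proof.
have [n] := ubnP (potential g0); elim: n g0 => // n IH g pot_g dist_g.
have [[e [w [u [eF uU ue gw lt]]]] | unbalanced] := pselect
  (exists e w u, [/\ e \in F, u \in U, u \in ends e, 0 < g e w & (load g u).+1 < load g w]).
  have wu : w != u by apply: contraTneq lt => ->; rewrite ltnNge leqnSn.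
  apply: (IH (move_unit g e w u)); last exact: distribution_move.
  by rewrite -ltnS (leq_trans _ pot_g) // ltnS potential_move_lt.
exists g => // e w u eF uU ue gw; rewrite leqNgt; apply/negP => lt.
by apply: unbalanced; exists e, w, u.
Qed.

End LoadBalancing.

Section BalancedLoadBound.
Variables (V E : choiceType) (ends : E -> {fset V}) (U : {fset V}) (F : {fset E}) (b : nat).
Local Notation distribution := (distribution ends U F b).
Local Notation load := (load F).
Local Notation balanced := (balanced ends U F).

Lemma balanced_units_below g t e : distribution g -> balanced g ->
  (forall x, x \in U -> load g x != t) -> e \in F ->
  ends e `&` [fset x in U | load g x < t] != fset0 ->
  b <= \sum_(x <- [fset x in U | load g x < t]) g e x.
Proof.
move=> [supp sumb] bal noload eF /fset0Pn[u]; rewrite !inE => /and3P[ue uU ut].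
rewrite -(sumb e eF); apply: leq_sum_fsupport => x xU gx.
rewrite !inE xU /= ltn_neqAle noload //.
exact: leq_trans (bal e x u eF uU ue gx) ut.
Qed.

Variables (R : realType) (beta : R).
Hypothesis hall : forall T : {fset V}, T `<=` U -> T != fset0 ->
  (beta * #|` T|%:R <= #|` [fset e in F | ends e `&` T != fset0]|%:R)%R.

Lemma balanced_load_ge g v : distribution g -> balanced g -> v \in U ->
  (b%:R * beta <= (load g v + #|` U|)%:R)%R.
Proof.
move=> dist bal vU; set d := load g v; set n := #|` U|.
have [j /andP[j0 jn] gap] := exists_gap_above (load g) vU.
set T := [fset x in U | load g x < d + j].
set ET := [fset e in F | ends e `&` T != fset0].
have TU : T `<=` U by apply/fsubsetP => x; rewrite !inE => /andP[].
have T0 : T != fset0 by apply/fset0Pn; exists v; rewrite !inE vU /=; lia.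
have units_in_T : #|` ET| * b <= #|` T| * (d + n).
  rewrite -!sum_fset_nat_const.
  apply: (@leq_trans (\sum_(e <- ET) \sum_(x <- T) g e x)).
    rewrite big_seq [X in _ <= X]big_seq; apply: leq_sum => e.
    by rewrite !inE => /andP[eF eT]; apply: balanced_units_below.
  apply: (@leq_trans (\sum_(e <- F) \sum_(x <- T) g e x)).
    by apply: leq_sum_fsubset; apply/fsubsetP => e; rewrite !inE => /andP[].
  rewrite exchange_big /= big_seq [X in _ <= X]big_seq; apply: leq_sum => x.
  by rewrite !inE => /andP[_]; rewrite /load; lia.
have Tpos : (0 < #|` T|%:R :> R)%R by rewrite ltr0n cardfs_gt0.
rewrite -(ler_pM2r Tpos) -mulrA (le_trans (ler_wpM2l (ler0n _ b) (hall TU T0))) //.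
by rewrite -!natrM ler_nat mulnC [X in _ <= X]mulnC.
Qed.

End BalancedLoadBound.

Section Hypergraph.
Variables (V E : choiceType) (ends : E -> {fset V}).
Hypothesis hne : forall e : E, ends e != fset0.
Hypothesis hdeg : finite_degree ends.
Local Notation edges U := (fset_set (edges_of ends U)).

Lemma finite_edges_of U : finite_set (edges_of ends U).
Proof.
have -> : edges_of ends U = (\bigcup_(v in [set` U]) inc_edges ends v)%classic.
  by apply/seteqP; split=> e [v vU ve]; exists v.
by apply: bigcup_finite => [|v _]; [exact: finite_fset | exact: hdeg].
Qed.

Lemma in_edges_of U e : (e \in edges U) = (ends e `&` U != fset0).
Proof.
rewrite in_fset_set; last exact: finite_edges_of.
apply/idP/fset0Pn => [/set_mem [v vU ve] | [v]]; first by exists v; rewrite in_fsetI ve.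
by rewrite in_fsetI => /andP[ve vU]; apply: mem_set; exists v.
Qed.

Lemma in_inc_edges v e : (e \in fset_set (inc_edges ends v)) = (v \in ends e).
Proof. by rewrite in_fset_set //; apply/idP/idP => [/set_mem | /mem_set]. Qed.

Lemma inc_edges_sub_edges_of U v : v \in U -> fset_set (inc_edges ends v) `<=` edges U.
Proof.
move=> vU; apply/fsubsetP => e; rewrite in_inc_edges in_edges_of => ve.
by apply/fset0Pn; exists v; rewrite in_fsetI ve.
Qed.

Lemma edges_of_fsubset U T : T `<=` U ->
  [fset e in edges U | ends e `&` T != fset0] = edges T.
Proof.
move=> TU; apply/fsetP => e; rewrite !inE !in_edges_of andb_idl // => /fset0Pn[v].
by rewrite in_fsetI => /andP[ve /(fsubsetP TU) vU]; apply/fset0Pn; exists v; rewrite in_fsetI ve.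
Qed.

Variable R : realType.
Local Open Scope ring_scope.

Lemma frac_orientation_sum_le1 (p : E -> V -> R) e (A : {fset V}) :
  frac_orientation ends p -> \sum_(v <- A) p e v <= 1.
Proof.
move=> [p0 pout psum]; rewrite -(psum e) -(big_fset_incl _ (fsubsetIr (ends e) A)).
  by apply: ler_sum_fsubset => [|v _]; [exact: fsubsetIl | exact: p0].
by move=> v vA; rewrite in_fsetI vA andbT; exact: pout.
Qed.

Lemma indegree_edges_of (p : E -> V -> R) U v : frac_orientation ends p -> v \in U ->
  indegree ends p v = \sum_(e <- edges U) p e v.
Proof.
move=> [_ pout _] vU; apply: big_fset_incl; first exact: inc_edges_sub_edges_of.
by move=> e _; rewrite in_inc_edges; exact: pout.
Qed.

Lemma orientable_le_density (alpha : R) U : orientable ends alpha -> U != fset0 ->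
  alpha <= #|` edges U|%:R / #|` U|%:R.
Proof.
move=> [p [pf indeg]] U0; rewrite ler_pdivlMr ?ltr0n ?cardfs_gt0 //.
rewrite mulr_natr -sumr_fset_const.
apply: (@le_trans _ _ (\sum_(v <- U) \sum_(e <- edges U) p e v)).
  rewrite big_seq [X in _ <= X]big_seq; apply: ler_sum => v vU.
  by rewrite -indegree_edges_of.
rewrite exchange_big /= -[_%:R]mul1r mulr_natr -sumr_fset_const.
by apply: ler_sum => e _; exact: frac_orientation_sum_le1.
Qed.


Lemma exists_distribution U b : exists g, distribution ends U (edges U) b g.
Proof.
have [c hc] : {c : E -> V & forall e, c e \in ends e /\ (e \in edges U -> c e \in U)}.
  apply: (@choice _ _ (fun e v => v \in ends e /\ (e \in edges U -> v \in U))) => e.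
  case: (boolP (e \in edges U)) => eU.
    by move: eU; rewrite in_edges_of => /fset0Pn[v]; rewrite in_fsetI => /andP[]; exists v.
  by have /fset0Pn[v ve] := hne e; exists v; split => // /(negP eU).
exists (fun e v => if (e \in edges U) && (v == c e) then b else 0%N); split.
- move=> e v; case: ifP => // /andP[eU /eqP ->] _.
  by have [ce /(_ eU) cU] := hc e.
- move=> e eU; have [_ /(_ eU) cU] := hc e.
  rewrite (big_fsetD1 _ cU) eU eqxx /= big1_seq ?addn0 // => v /andP[_].
  by rewrite in_fsetD1 => /andP[/negbTE -> _].
Qed.

Definition scaled_orientation U b (g : E -> V -> nat) : E -> V -> R := fun e v =>
  if e \in edges U then (g e v)%:R / b%:R
  else (v \in ends e)%:R / #|` ends e|%:R.

Lemma frac_orientation_scaled U b g : (0 < b)%N ->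
  distribution ends U (edges U) b g -> frac_orientation ends (scaled_orientation U b g).
Proof.
move=> b0 [supp sumb]; rewrite /scaled_orientation.
have g0 e v : v \notin ends e `&` U -> g e v = 0%N.
  move=> veU; apply/eqP; rewrite -leqn0 leqNgt; apply: contra veU.
  by move=> /supp[_ ve vU]; rewrite in_fsetI ve vU.
have sum_ends e : e \in edges U -> \sum_(v <- ends e) g e v = b.
  move=> eU; rewrite -(sumb e eU).
  rewrite -(big_fset_incl _ (fsubsetIl (ends e) U)) => [|v _]; last exact: g0.
  by rewrite (big_fset_incl _ (fsubsetIr (ends e) U)) // => v _; exact: g0.
split; [move=> e v | move=> e v ve | move=> e].
- by case: ifP => _; rewrite divr_ge0.
- by case: ifP; rewrite ?g0 ?in_fsetI ?(negbTE ve) ?mul0r.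
case: (boolP (e \in edges U)) => eU.
  by rewrite -mulr_suml -natr_sum sum_ends // mulfV // pnatr_eq0 -lt0n.
rewrite (eq_big_seq (fun _ => #|` ends e|%:R^-1)) => [|v ->]; last by rewrite mul1r.
by rewrite sumr_fset_const -[_ *+ _]mulr_natr mulVf // pnatr_eq0 cardfs_eq0.
Qed.

Lemma indegree_scaled U b g v : (0 < b)%N -> distribution ends U (edges U) b g ->
  v \in U -> indegree ends (scaled_orientation U b g) v = (load (edges U) g v)%:R / b%:R.
Proof.
move=> b0 dist vU; rewrite (indegree_edges_of (frac_orientation_scaled b0 dist) vU).
by rewrite /load natr_sum mulr_suml; apply: eq_big_seq => e eU; rewrite /scaled_orientation eU.
Qed.

Lemma finitely_orientable (alpha beta : R) (U : {fset V}) : alpha < beta ->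
  (forall T : {fset V}, T != fset0 -> beta * #|` T|%:R <= #|` edges T|%:R) ->
  exists p, frac_orientation ends p /\ forall v, v \in U -> alpha <= indegree ends p v.
Proof.
move=> ab hall; set n := #|` U|.
have n_ge0 : 0 <= n%:R / (beta - alpha) by rewrite divr_ge0 // subr_ge0 ltW.
have [b nb] : exists b : nat, n%:R / (beta - alpha) < b%:R.
  by exists (Num.Def.archi_bound (n%:R / (beta - alpha))); apply: archi_boundP.
have b0 : (0 < b)%N by rewrite -(ltr0n R) (le_lt_trans n_ge0 nb).
have [g0 /exists_balanced[g dist bal]] := exists_distribution U b.
have hallU T : T `<=` U -> T != fset0 ->
    beta * #|` T|%:R <= #|` [fset e in edges U | ends e `&` T != fset0]|%:R.
  by move=> TU; rewrite edges_of_fsubset //; exact: hall.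
exists (scaled_orientation U b g); split => [|v vU]; first exact: frac_orientation_scaled.
rewrite indegree_scaled // ler_pdivlMr ?ltr0n //.
have := balanced_load_ge hallU dist bal vU; rewrite natrD -/n.
move: nb; rewrite ltr_pdivrMr ?subr_gt0 // mulrBr [alpha * _]mulrC.
lra.
Qed.

End Hypergraph.

(* [compact_In0] needs a pointed space, and [prod_topology] is only topological. *)
Definition ptws_space (R : realType) (I : Type) := prod_topology (fun _ : I => R).
HB.instance Definition _ (R : realType) (I : Type) := Topological.on (ptws_space R I).
HB.instance Definition _ (R : realType) (I : Type) :=
  isPointed.Build (ptws_space R I) (fun _ => 0%R).

Lemma continuous_sum_coord (R : realType) (I : eqType) (J : Type) (f : J -> I) (s : seq J) :
  continuous (fun x : ptws_space R I => (\sum_(j <- s) x (f j))%R).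
Proof.
apply: continuous_big => [|j _]; first exact: add_continuous.
exact: (@proj_continuous I (fun _ => R)).
Qed.

Section Compactness.
Variables (R : realType) (V E : choiceType) (ends : E -> {fset V}).
Local Open Scope classical_set_scope.
Local Open Scope ring_scope.

Lemma orientable_of_finitely_orientable (alpha : R) :
  (forall U : {fset V}, exists p, frac_orientation ends p /\
     forall v, v \in U -> alpha <= indegree ends p v) ->
  orientable ends alpha.
Proof.
move=> fin; have [[v0 _] | noV] := pselect (exists v : V, True); last first.
  (* With no nodes the family below is empty and [compact_In0] says nothing. *)
  have [p [pf _]] := fin fset0; exists p; split => // v.
  by case: noV; exists v.
pose X := ptws_space R (E * V).
pose cube : set X := [set x | forall i, `[0, 1]%classic (x i)].
pose K : set X :=
  \bigcap_(i in [set i : E * V | i.2 \notin ends i.1]) [set x | x i = 0] `&`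
  \bigcap_(e in setT) [set x | \sum_(v <- ends e) x (e, v) = 1].
pose N v : set X := [set x | alpha <= \sum_(e <- fset_set (inc_edges ends v)) x (e, v)].
have cube_compact : compact cube.
  by apply: (@tychonoff _ (fun _ => R) (fun _ => `[0, 1]%classic)) => i; exact: segment_compact.
have K_closed : closed K.
  apply: closedI; apply: closed_bigI.
  - move=> i _; apply: preimage_closed (@closed_eq _ 0) => x _.
    exact: (@proj_continuous _ (fun _ => R) i).
  - move=> e _; apply: preimage_closed (@closed_eq _ 1) => x _.
    exact: (@continuous_sum_coord R _ _ (fun v => (e, v)) (ends e) x).
have N_closed v : closed (N v).
  apply: preimage_closed (@closed_ge _ alpha) => x _.
  exact: (@continuous_sum_coord R _ _ (fun e => (e, v)) _ x).
move: cube_compact; rewrite compact_In0 => /(_ V setT (fun v => cube `&` (K `&` N v))) [].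
- by exists (fun v => K `&` N v) => // v _; exact: closedI.
- move=> D _; have [p [pf indeg]] := fin D; have [p0 pout psum] := pf.
  exists (fun i => p i.1 i.2) => v /= vD; split; last split.
  + move=> [e w] /=; rewrite in_itv /= p0 /=.
    by have := frac_orientation_sum_le1 e [fset w] pf; rewrite big_seq_fset1.
  + by split=> [[e w] /= /pout | e _ /=].
  + exact: indeg.
- move=> x xI; have [cube_x [[x0 x1] _]] := xI v0 I.
  exists (fun e v => x (e, v)); split; [split | move=> v].
  + by move=> e v; have := cube_x (e, v); rewrite /= in_itv /= => /andP[].
  + by move=> e v ve; exact: (x0 (e, v)).
  + by move=> e; exact: (x1 e I).
  + by have [_ [_]] := xI v I.
Qed.

End Compactness.

Local Open Scope classical_set_scope.
Local Open Scope ring_scope.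

Lemma EFin_between (R : realType) (x y : \bar R) :
  (x < y)%E -> exists2 r : R, (x < r%:E)%E & (r%:E < y)%E.
Proof.
case: x => [a| |]; case: y => [b| |] //=.
- by rewrite lte_fin => ab; exists ((a + b) / 2); rewrite lte_fin; lra.
- by exists (a + 1); rewrite ?ltey // lte_fin; lra.
- by exists (b - 1); rewrite ?ltNye // lte_fin; lra.
- by exists 0; rewrite ?ltey ?ltNye.
Qed.

Lemma orientable_below_Hall (R : realType) (V E : choiceType) (ends : E -> {fset V})
    (alpha : R) : (forall e, ends e != fset0) -> finite_degree ends ->
  (alpha%:E < Hall R ends)%E -> orientable ends alpha.
Proof.
move=> hne hdeg /EFin_between[beta ab bH]; apply: orientable_of_finitely_orientable => U.
apply: (finitely_orientable hne hdeg (beta := beta)); first by rewrite -lte_fin.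
move=> T T0; rewrite -ler_pdivlMr ?ltr0n ?cardfs_gt0 // -lee_fin.
by rewrite (le_trans (ltW bH)) //; apply: ereal_inf_lbound; exists T.
Qed.

Theorem propositionB1 (R : realType) (V E : choiceType) (ends : E -> {fset V})
  (hne : forall e : E, ends e != fset0)
  (hdeg : finite_degree ends) :
  Hall R ends = ereal_sup [set alpha%:E | alpha in [set alpha : R | orientable ends alpha]].
Proof.
apply/eqP; rewrite eq_le; apply/andP; split.
- rewrite leNgt; apply/negP => /EFin_between[r supr rH].
  suff : (r%:E <= ereal_sup [set alpha%:E | alpha in orientable ends])%E by rewrite leNgt supr.
  by apply: ereal_sup_ubound; exists r => //; exact: orientable_below_Hall.
- apply: ge_ereal_sup => _ [alpha orient <-]; apply: le_ereal_inf_tmp => _ [U U0 <-].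
  by rewrite lee_fin; exact: orientable_le_density.
Qed.
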